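(* CAP has at most one solution.
   Context: Let $s:[0,B]\to[0,\infty)$ satisfy $s(0)=0$, be strictly increasing, strictly concave, differentiable, with $s'$ continuous on $[0,B]$ (so $s'>0$ is strictly decreasing). Fix $b\in(0,B]$, an integer $k\ge2$, and constants $c_1\ge c_2\ge\cdots\ge c_k>0$. The Constrained Allocation Problem (CAP) is: find $\theta_1,\dots,\theta_k\ge0$ such that (i) $\theta_1+\cdots+\theta_k=b$; (ii) $\theta_1\le\theta_2\le\cdots\le\theta_k$; (iii) $s'(\theta_j)/s'(\theta_i)=c_j/c_i$ whenever $i<j$ and $\theta_j\ge\theta_i>0$; (iv) $s'(\theta_j)/s'(0)\ge c_j/c_i$ whenever $i<j$ and $\theta_j>\theta_i=0$. *)

From Stdlib Require Import Reals.
Open Scope R_scope.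

Fixpoint rsum (f : nat -> R) (n : nat) : R :=
  match n with
  | O => 0
  | S m => rsum f m + f (S m)
  end.

Definition in0B (B x : R) : Prop := 0 <= x <= B.

Definition has_deriv_within (B : R) (s : R -> R) (x d : R) : Prop :=
  forall eps : R, 0 < eps -> exists delta : R, 0 < delta /\
    forall y : R, in0B B y -> Rabs (y - x) < delta ->
      Rabs (s y - s x - d * (y - x)) <= eps * Rabs (y - x).

Definition cont_within (B : R) (f : R -> R) (x : R) : Prop :=
  forall eps : R, 0 < eps -> exists delta : R, 0 < delta /\
    forall y : R, in0B B y -> Rabs (y - x) < delta -> Rabs (f y - f x) < eps.

Definition admissible_s (B : R) (s ds : R -> R) : Prop :=
  0 < B /\
  s 0 = 0 /\
  (forall x, in0B B x -> 0 <= s x) /\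
  (forall x y, in0B B x -> in0B B y -> x < y -> s x < s y) /\
  (forall x y t, in0B B x -> in0B B y -> x <> y -> 0 < t < 1 ->
      s (t * x + (1 - t) * y) > t * s x + (1 - t) * s y) /\
  (forall x, in0B B x -> has_deriv_within B s x (ds x)) /\
  (forall x, in0B B x -> cont_within B ds x).

(* theta, c indexed by 1..k. CAP solution for budget b. *)
Definition CAP_solution (ds : R -> R) (b : R) (k : nat) (c theta : nat -> R)
  : Prop :=
  (forall i, (1 <= i <= k)%nat -> 0 <= theta i) /\
  rsum theta k = b /\
  (forall i j, (1 <= i)%nat -> (i < j)%nat -> (j <= k)%nat ->
      theta i <= theta j) /\
  (forall i j, (1 <= i)%nat -> (i < j)%nat -> (j <= k)%nat ->
      theta j >= theta i -> theta i > 0 ->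
      ds (theta j) / ds (theta i) = c j / c i) /\
  (forall i j, (1 <= i)%nat -> (i < j)%nat -> (j <= k)%nat ->
      theta j > theta i -> theta i = 0 ->
      ds (theta j) / ds 0 >= c j / c i).

(* A strictly concave [s] has a strictly decreasing derivative, positive on
   [0,B).  If two solutions satisfy [theta k <= theta' k] but
   [theta' i < theta i] for some [i], then
   [theta' i < theta i <= theta k <= theta' k], so
   [c k / c i = ds (theta k) / ds (theta i) > ds (theta' k) / ds (theta' i)],
   contradicting condition (iii) or (iv) for [theta'].  Hence [theta <= theta']
   pointwise, and since both sum to [b] they are equal. *)

From Stdlib Require Import Reals Lra Lia.
Open Scope R_scope.

Lemma rsum_nonneg f n :
  (forall i, (1 <= i <= n)%nat -> 0 <= f i) -> 0 <= rsum f n.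
Proof.
  induction n as [|n IHn]; simpl; intros Hf; [lra|].
  assert (0 <= rsum f n) by (apply IHn; intros; apply Hf; lia).
  pose proof (Hf (S n) ltac:(lia)); lra.
Qed.

Lemma rsum_ge_term f n i :
  (forall i, (1 <= i <= n)%nat -> 0 <= f i) -> (1 <= i <= n)%nat ->
  f i <= rsum f n.
Proof.
  induction n as [|n IHn]; simpl; intros Hf Hi; [lia|].
  assert (0 <= rsum f n) by (apply rsum_nonneg; intros; apply Hf; lia).
  destruct (Nat.eq_dec i (S n)) as [->|Hin]; [lra|].
  assert (f i <= rsum f n) by (apply IHn; [intros; apply Hf|]; lia).
  pose proof (Hf (S n) ltac:(lia)); lra.
Qed.

Lemma rsum_ge_two_terms f n i j :
  (forall i, (1 <= i <= n)%nat -> 0 <= f i) ->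
  (1 <= i)%nat -> (i < j)%nat -> (j <= n)%nat ->
  f i + f j <= rsum f n.
Proof.
  induction n as [|n IHn]; simpl; intros Hf Hi Hij Hj; [lia|].
  destruct (Nat.eq_dec j (S n)) as [->|Hjn].
  - assert (f i <= rsum f n) by (apply rsum_ge_term; [intros; apply Hf|]; lia).
    lra.
  - assert (f i + f j <= rsum f n) by (apply IHn; [intros; apply Hf|..]; lia).
    pose proof (Hf (S n) ltac:(lia)); lra.
Qed.

Lemma rsum_minus f g n :
  rsum (fun i => g i - f i) n = rsum g n - rsum f n.
Proof. induction n as [|n IHn]; simpl; [|rewrite IHn]; ring. Qed.

Lemma rsum_eq_of_le f g n :
  (forall i, (1 <= i <= n)%nat -> f i <= g i) -> rsum f n = rsum g n ->
  forall i, (1 <= i <= n)%nat -> f i = g i.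
Proof.
  intros Hfg Hsum i Hi.
  assert (Hgap : g i - f i <= rsum (fun i => g i - f i) n).
  { apply (rsum_ge_term (fun i => g i - f i)); [|exact Hi].
    intros j Hj; specialize (Hfg j Hj); lra. }
  rewrite rsum_minus in Hgap.
  specialize (Hfg i Hi); lra.
Qed.

Section ConcaveDerivative.

Variables (B : R) (s ds : R -> R).

Hypothesis s_strictly_concave : forall x y t, in0B B x -> in0B B y -> x <> y ->
  0 < t < 1 -> s (t * x + (1 - t) * y) > t * s x + (1 - t) * s y.
Hypothesis s_deriv : forall x, in0B B x -> has_deriv_within B s x (ds x).

Lemma tangent_above x y : in0B B x -> in0B B y -> s y - s x <= ds x * (y - x).
Proof.
  intros Hx Hy.
  destruct (Req_dec x y) as [<-|Hxy]; [lra|].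
  set (d := Rabs (y - x)).
  assert (Hd : 0 < d) by (apply Rabs_pos_lt; lra).
  apply Rle_plus_epsilon; intros eps Heps.
  destruct (s_deriv x Hx (eps / d)) as (delta & Hdelta & Hnear);
    [apply Rdiv_lt_0_compat; lra|].
  (* Move from [x] towards [y] by less than [delta]. *)
  set (t := delta / (delta + d)).
  assert (Ht_def : t * (delta + d) = delta) by (unfold t; field; lra).
  clearbody t.
  assert (Ht : 0 < t < 1).
  { split; apply (Rmult_lt_reg_r (delta + d)); lra. }
  set (z := t * y + (1 - t) * x).
  assert (Hz : in0B B z) by (unfold in0B, z in *; nra).
  assert (Hzx : z - x = t * (y - x)) by (unfold z; ring).
  assert (Hdist : Rabs (z - x) = t * d).
  { rewrite Hzx, Rabs_mult, Rabs_pos_eq; [reflexivity | lra]. }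
  specialize (Hnear z Hz ltac:(nra)).
  rewrite Hdist in Hnear.
  replace (eps / d * (t * d)) with (eps * t) in Hnear by (field; lra).
  pose proof (Rle_abs (s z - s x - ds x * (z - x))) as Habs.
  pose proof (s_strictly_concave y x t Hy Hx (not_eq_sym Hxy) Ht) as Hconc.
  fold z in Hconc.
  clearbody z.
  apply (Rmult_le_reg_l t); [lra|].
  rewrite Hzx in Habs, Hnear; lra.
Qed.

Lemma ds_decreasing x y : in0B B x -> in0B B y -> x < y -> ds y < ds x.
Proof.
  intros Hx Hy Hxy.
  set (m := (x + y) / 2).
  assert (Hm : in0B B m) by (unfold in0B, m in *; lra).
  pose proof (tangent_above x m Hx Hm) as Tx.
  pose proof (tangent_above y m Hy Hm) as Ty.
  pose proof (s_strictly_concave x y (1/2) Hx Hy ltac:(lra) ltac:(lra)) as Hconc.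
  replace (1/2 * x + (1 - 1/2) * y) with m in Hconc by (unfold m; field).
  unfold m in *; nra.
Qed.

Lemma ds_nonincreasing x y : in0B B x -> in0B B y -> x <= y -> ds y <= ds x.
Proof.
  intros Hx Hy [Hxy | <-]; [left; apply ds_decreasing|right]; auto.
Qed.

Hypothesis s_increasing : forall x y, in0B B x -> in0B B y -> x < y -> s x < s y.

Lemma ds_pos x : 0 <= x < B -> 0 < ds x.
Proof.
  intros Hx.
  assert (HB : in0B B B) by (unfold in0B; lra).
  pose proof (tangent_above x B ltac:(unfold in0B; lra) HB).
  pose proof (s_increasing x B ltac:(unfold in0B; lra) HB ltac:(lra)).
  nra.
Qed.

Lemma ds_ratio_lt x' x y y' :
  0 <= x' -> x' < x -> x <= y -> y <= y' -> y' <= B -> y < B ->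
  ds y' / ds x' < ds y / ds x.
Proof.
  intros Hx' Hx'x Hxy Hyy' Hy'B HyB.
  assert (Hdx : 0 < ds x) by (apply ds_pos; lra).
  assert (Hdy : 0 < ds y) by (apply ds_pos; lra).
  assert (Hdx' : ds x < ds x') by (apply ds_decreasing; unfold in0B; lra).
  assert (Hdy' : ds y' <= ds y) by (apply ds_nonincreasing; unfold in0B; lra).
  apply Rle_lt_trans with (ds y / ds x').
  - apply Rmult_le_compat_r; [left; apply Rinv_0_lt_compat|]; lra.
  - apply Rmult_lt_compat_l; [|apply Rinv_lt_contravar]; nra.
Qed.

End ConcaveDerivative.

Lemma CAP_ratio_ge ds b k c theta i j :
  CAP_solution ds b k c theta ->
  (1 <= i)%nat -> (i < j)%nat -> (j <= k)%nat -> theta i < theta j ->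
  c j / c i <= ds (theta j) / ds (theta i).
Proof.
  intros (Hnn & _ & _ & Hpos & Hzero) Hi Hij Hj Hlt.
  pose proof (Hnn i ltac:(lia)) as Hi_nn.
  destruct (Req_dec (theta i) 0) as [H0|H0].
  - rewrite H0; apply Rge_le, Hzero; auto; lra.
  - rewrite Hpos; auto; lra.
Qed.

Section CAPUniqueness.

Variables (B : R) (s ds : R -> R) (b : R) (k : nat) (c : nat -> R).
Hypothesis s_admissible : admissible_s B s ds.
Hypothesis b_le_B : b <= B.

Lemma CAP_le_of_last_le theta theta' :
  CAP_solution ds b k c theta -> CAP_solution ds b k c theta' ->
  theta k <= theta' k ->
  forall i, (1 <= i <= k)%nat -> theta i <= theta' i.
Proof.
  intros Hsol Hsol' Hlast i Hi.
  pose proof s_admissible as (_ & _ & _ & Hinc & Hconc & Hder & _).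
  pose proof Hsol as (Hnn & Hsum & Hmono & Hpos & _).
  pose proof Hsol' as (Hnn' & Hsum' & _).
  destruct (Nat.eq_dec i k) as [->|Hik]; [lra|].
  apply Rnot_lt_le; intros Hlt.
  assert (Hi_pos : theta i > 0) by (pose proof (Hnn' i Hi); lra).
  assert (Hi_le_k : theta i <= theta k) by (apply Hmono; lia).
  assert (Hik_sum : theta i + theta k <= b).
  { rewrite <- Hsum; apply rsum_ge_two_terms; auto; lia. }
  assert (Hk'_le : theta' k <= b).
  { rewrite <- Hsum'; apply rsum_ge_term; auto; lia. }
  assert (Hratio : ds (theta k) / ds (theta i) = c k / c i).
  { apply Hpos; [lia | lia | lia | lra | exact Hi_pos]. }
  pose proof (CAP_ratio_ge ds b k c theta' i k Hsol'
                ltac:(lia) ltac:(lia) ltac:(lia) ltac:(lra)) as Hratio'.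
  pose proof (ds_ratio_lt B s ds Hconc Hder Hinc
                (theta' i) (theta i) (theta k) (theta' k)
                ltac:(apply Hnn'; lia) Hlt Hi_le_k Hlast ltac:(lra) ltac:(lra)).
  lra.
Qed.

Lemma CAP_eq_of_last_le theta theta' :
  CAP_solution ds b k c theta -> CAP_solution ds b k c theta' ->
  theta k <= theta' k ->
  forall i, (1 <= i <= k)%nat -> theta i = theta' i.
Proof.
  intros Hsol Hsol' Hlast.
  apply rsum_eq_of_le; [exact (CAP_le_of_last_le theta theta' Hsol Hsol' Hlast)|].
  destruct Hsol as (_ & -> & _), Hsol' as (_ & -> & _); reflexivity.
Qed.

End CAPUniqueness.

Theorem proposition3 (B : R) (s ds : R -> R) (b : R) (k : nat) (c : nat -> R)
  (theta theta' : nat -> R) :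
  admissible_s B s ds ->
  0 < b <= B ->
  (2 <= k)%nat ->
  (forall i j, (1 <= i)%nat -> (i < j)%nat -> (j <= k)%nat -> c i >= c j) ->
  (forall i, (1 <= i <= k)%nat -> c i > 0) ->
  CAP_solution ds b k c theta ->
  CAP_solution ds b k c theta' ->
  forall i, (1 <= i <= k)%nat -> theta i = theta' i.
Proof.
  intros Ha [_ Hb] _ _ _ Hsol Hsol' i Hi.
  destruct (Rle_dec (theta k) (theta' k)) as [Hle|Hgt].
  - exact (CAP_eq_of_last_le B s ds b k c Ha Hb theta theta' Hsol Hsol' Hle i Hi).
  - symmetry.
    apply (CAP_eq_of_last_le B s ds b k c Ha Hb theta' theta Hsol' Hsol); [lra | exact Hi].
Qed.
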